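(* Let $\gamma>0$ be such that $\sum_{k=1}^{N-1}\frac1{\nu_{k,N}}\leq\gamma$ for every $N\in\mathbb N$. Then for every $N\in\mathbb N$ and every $x\in\mathbb R^N$, $\langle x,K_Nx\rangle\geq\frac1{\gamma}N\sup_k|x_k-\overline x|^2$.
   Context: Fix $\mu>1$. For $N\in\mathbb N$, $K_N:\mathbb R^N\to\mathbb R^N$ is $(K_Nx)_k=\frac{\mu}{4\sin^2(\pi/N)}(2x_k-x_{k+1}-x_{k-1})$ with $x_{N+1}:=x_1$, $x_0:=x_N$; $\langle\cdot,\cdot\rangle$ is the Euclidean scalar product; $\overline x=\frac1N\sum_kx_k$; $\nu_{k,N}=\mu\frac{\sin^2(k\pi/N)}{\sin^2(\pi/N)}$, $k=0,\dots,N-1$, are the eigenvalues of $K_N$. *)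

From HB Require Import structures.
From mathcomp Require Import all_boot all_order all_algebra.
From mathcomp Require Import reals trigo.
Set Implicit Arguments. Unset Strict Implicit. Unset Printing Implicit Defensive.
Import Order.TTheory GRing.Theory Num.Theory.
Local Open Scope ring_scope.

(* Vectors of R^N are functions 'I_N -> R (0-based indices, cyclic
   neighbours via ordS / ord_pred, i.e. x_{N+1} := x_1, x_0 := x_N). *)

Definition KN (R : realType) (mu : R) (N : nat) (x : 'I_N -> R) : 'I_N -> R :=
  fun k => mu / (4 * sin (pi / N%:R) ^+ 2) * (2 * x k - x (ordS k) - x (ord_pred k)).

Definition nu (R : realType) (mu : R) (k N : nat) : R :=
  mu * sin (k%:R * pi / N%:R) ^+ 2 / sin (pi / N%:R) ^+ 2.

Definition dotp (R : realType) (N : nat) (x y : 'I_N -> R) : R :=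
  \sum_(i < N) x i * y i.

Definition mean (R : realType) (N : nat) (x : 'I_N -> R) : R :=
  (N%:R)^-1 * \sum_(i < N) x i.

(* sup_k |x_k - x-bar|^2 (finite max; all terms are >= 0) *)
Definition supdev (R : realType) (N : nat) (x : 'I_N -> R) : R :=
  \big[Num.max/0]_(k < N) `|x k - mean x| ^+ 2.

From HB Require Import structures.
From mathcomp Require Import all_boot all_order all_algebra.
From mathcomp Require Import reals trigo.
From mathcomp Require Import ring lra.

(* Write K_N = c L with c = mu / (4 sin^2(pi/N)) and L x = 2 x_k - x_(k+1) - x_(k-1),
   so that <x, L y> is the Dirichlet form sum_i (x_(i+1) - x_i) (y_(i+1) - y_i).
   The cosine modes u_k(i) = cos(2 k pi (i - j) / N) are eigenvectors of L with
   eigenvalues lambda_k = 4 sin^2(k pi/N), and the Green function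
   g = (1/N) sum_(k=1)^(N-1) u_k / lambda_k solves L g = e_j - 1/N.  Hence
   x_j - mean x = <x, L g>, and Cauchy-Schwarz for the Dirichlet form gives
   (x_j - mean x)^2 <= <g, L g> <x, L x> = (1/N) (sum_k 1/lambda_k) <x, L x>.
   Finally nu_k = c lambda_k, so the hypothesis bounds sum_k 1/lambda_k by c gamma. *)

Set Implicit Arguments.
Unset Strict Implicit.
Unset Printing Implicit Defensive.
Import Order.TTheory GRing.Theory Num.Theory.
Local Open Scope ring_scope.

Lemma CauchySchwarz_sum (R : realFieldType) (I : finType) (a b : I -> R) :
  (\sum_i a i * b i) ^+ 2 <= (\sum_i a i ^+ 2) * (\sum_i b i ^+ 2).
Proof.
have [b0 | b_gt0] := eqVneq (\sum_i b i ^+ 2) 0.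
  have b_eq0 i : b i = 0.
    by apply/eqP; rewrite -sqrf_eq0 (psumr_eq0P _ b0) // => k _; exact: sqr_ge0.
  by rewrite big1 ?expr0n ?b0 ?mulr0 // => i _; rewrite b_eq0 mulr0.
have {}b_gt0 : 0 < \sum_i b i ^+ 2 by rewrite lt_def b_gt0 sumr_ge0 // => i _; exact: sqr_ge0.
move: b_gt0.
set A := \sum_i a i ^+ 2; set B := \sum_i b i ^+ 2; set C := \sum_i a i * b i => B_gt0.
have : 0 <= \sum_i (a i * B - b i * C) ^+ 2 by apply: sumr_ge0 => i _; exact: sqr_ge0.
have -> : \sum_i (a i * B - b i * C) ^+ 2 = B ^+ 2 * A - 2 * B * C * C + C ^+ 2 * B.
  transitivity (\sum_i (B ^+ 2 * a i ^+ 2 - 2 * B * C * (a i * b i) + C ^+ 2 * b i ^+ 2)).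
    by apply: eq_bigr => i _; ring.
  by rewrite big_split sumrB -!mulr_sumr.
nra.
Qed.

Section Laplacian.
Variables (R : realType) (N : nat).

Definition lap (x : 'I_N -> R) (i : 'I_N) : R := 2 * x i - x (ordS i) - x (ord_pred i).

Lemma dotp_lap (x y : 'I_N -> R) :
  dotp x (lap y) = \sum_i (x (ordS i) - x i) * (y (ordS i) - y i).
Proof.
rewrite /dotp (eq_bigr (fun i => x i * (y i - y (ordS i)) + x i * (y i - y (ord_pred i))));
  last by move=> i _; rewrite /lap; ring.
rewrite big_split /= [X in _ + X](reindex_inj (@ordS_inj N)) -big_split /=.
by apply: eq_bigr => i _; rewrite ordSK; ring.
Qed.

Lemma dotp_lap_ge0 (x : 'I_N -> R) : 0 <= dotp x (lap x).
Proof. by rewrite dotp_lap sumr_ge0 // => i _; rewrite -expr2 sqr_ge0. Qed.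

Lemma dotp_lap_sqr_le (x y : 'I_N -> R) :
  dotp x (lap y) ^+ 2 <= dotp x (lap x) * dotp y (lap y).
Proof.
have dotp_lap_sqr z : dotp z (lap z) = \sum_i (z (ordS i) - z i) ^+ 2.
  by rewrite dotp_lap; apply: eq_bigr => i _; rewrite expr2.
rewrite !dotp_lap_sqr dotp_lap.
exact: CauchySchwarz_sum.
Qed.

Lemma dotp_KN (mu : R) (x : 'I_N -> R) :
  dotp x (KN mu x) = mu / (4 * sin (pi / N%:R) ^+ 2) * dotp x (lap x).
Proof. by rewrite /dotp mulr_sumr; apply: eq_bigr => i _; rewrite /KN /lap; ring. Qed.

End Laplacian.

Lemma sum_cos_arith (R : realType) (a b : R) (n : nat) :
  2 * sin a * \sum_(i < n) cos (2 * a * i%:R + b) = sin (2 * a * n%:R + b - a) - sin (b - a).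
Proof.
pose f (i : nat) := sin (2 * a * i%:R + b - a).
rewrite mulr_sumr (eq_bigr (fun i : 'I_n => f i.+1 - f i)) => [|i _].
  by rewrite -(big_mkord xpredT (fun i => f i.+1 - f i)) telescope_sumr // /f mulr0n mulr0 add0r.
rewrite /f; set x := 2 * a * i%:R + b.
have -> : 2 * a * i.+1%:R + b - a = x + a by rewrite /x -[i.+1]addn1 natrD; ring.
by rewrite sinD sinB; ring.
Qed.

Section Waves.
Variables (R : realType) (N : nat).

Definition lap_eig (k : nat) : R := 4 * sin (k%:R * pi / N%:R) ^+ 2.

Definition wave (k : nat) (t : R) : R := cos (2 * (k%:R * pi / N%:R) * t).

Lemma sin_kpiN_gt0 k : (0 < k < N)%N -> 0 < sin (k%:R * pi / N%:R : R).
Proof.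
case/andP=> k_gt0 kN; have N_gt0 : (0 < N)%N := ltn_trans k_gt0 kN.
apply: sin_gt0_pi; rewrite divr_gt0 ?mulr_gt0 ?pi_gt0 ?ltr0n //=.
by rewrite ltr_pdivrMr ?ltr0n // mulrC ltr_pM2l ?pi_gt0 ?ltr_nat.
Qed.

Lemma lap_eig_gt0 k : (0 < k < N)%N -> 0 < lap_eig k.
Proof. by move=> hk; rewrite /lap_eig mulr_gt0 // exprn_gt0 // sin_kpiN_gt0. Qed.

Lemma wave0 t : wave 0 t = 1.
Proof. by rewrite /wave !mul0r mulr0 mul0r cos0. Qed.

Lemma waveN k t : wave k (- t) = wave k t.
Proof. by rewrite /wave mulrN cosN. Qed.

Lemma waveC k d : wave k d%:R = wave d k%:R.
Proof. by rewrite /wave; congr cos; ring. Qed.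

Lemma wave_addr_mulN k t m : wave k (t + (m * N)%:R) = wave k t.
Proof.
have [-> | N_gt0] := posnP N; first by rewrite muln0 addr0.
rewrite /wave -[RHS](periodicn (@cosD2pi R) (k * m)) natrM; congr cos.
by rewrite -mulrnA -[pi *+ _]mulr_natr !natrM; field; rewrite pnatr_eq0 -lt0n.
Qed.

Lemma wave_modn k m t : wave k ((m %% N)%:R + t) = wave k (m%:R + t).
Proof. by rewrite {2}(divn_eq m N) natrD [(_ * N)%:R + _]addrC addrAC wave_addr_mulN. Qed.

Lemma wave_second_diff k t :
  2 * wave k t - wave k (t + 1) - wave k (t - 1) = lap_eig k * wave k t.
Proof.
rewrite /wave /lap_eig; set a := k%:R * pi / N%:R.
have cos2a : cos (2 * a) = 1 - 2 * sin a ^+ 2.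
  by rewrite mulr_natl cos_mulr2n cos2sin2 -mulr_natl; ring.
by rewrite !mulrDr mulrN !mulr1 cosD cosB cos2a; ring.
Qed.

Lemma sum_wave_eq0 k s : (0 < k < N)%N -> \sum_(i < N) wave k (i%:R + s) = 0.
Proof.
move=> hk; have := lt0r_neq0 (sin_kpiN_gt0 hk).
set a := k%:R * pi / N%:R => sin_neq0.
have N_neq0 : N%:R != 0 :> R.
  by case/andP: hk => k_gt0 kN; rewrite pnatr_eq0 -lt0n (ltn_trans k_gt0 kN).
have two_sin_neq0 : 2 * sin a != 0 by rewrite mulf_neq0 ?pnatr_eq0.
apply: (mulfI two_sin_neq0); rewrite mulr0.
rewrite (eq_bigr (fun i : 'I_N => cos (2 * a * i%:R + 2 * a * s))) => [|i _]; last first.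
  by rewrite /wave mulrDr.
rewrite sum_cos_arith.
have -> : 2 * a * N%:R + 2 * a * s - a = (2 * a * s - a) + pi *+ 2 *+ k.
  by rewrite /a -mulrnA -[pi *+ _]mulr_natr natrM; field.
by rewrite (periodicn (@sinD2pi R)) subrr.
Qed.

End Waves.

Section Green.
Variables (R : realType) (N : nat) (j : 'I_N).

Let N_gt0 : (0 < N)%N := leq_ltn_trans (leq0n j) (ltn_ord j).

Definition mode (k : nat) (i : 'I_N) : R := wave N k (i%:R - j%:R).

Definition green (i : 'I_N) : R :=
  N%:R^-1 * \sum_(1 <= k < N) (lap_eig R N k)^-1 * mode k i.

Lemma mode_center k : mode k j = 1.
Proof. by rewrite /mode /wave subrr mulr0 cos0. Qed.

Lemma lap_mode k i : lap (mode k) i = lap_eig R N k * mode k i.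
Proof.
rewrite /lap /mode /= !wave_modn.
have -> : i.+1%:R - j%:R = (i%:R - j%:R) + 1 :> R by rewrite -[i.+1]addn1 natrD; ring.
have -> : (i + N).-1%:R - j%:R = (i%:R - j%:R - 1) + (1 * N)%:R :> R.
  by rewrite -subn1 natrB ?natrD ?mul1n ?addn_gt0 ?N_gt0 ?orbT //; ring.
by rewrite wave_addr_mulN wave_second_diff.
Qed.

Lemma sum_mode k : (0 < k < N)%N -> \sum_i mode k i = 0.
Proof. exact: sum_wave_eq0. Qed.

Lemma sum_modes i : \sum_(1 <= k < N) mode k i = N%:R * (i == j)%:R - 1.
Proof.
suff full : \sum_(0 <= k < N) mode k i = N%:R * (i == j)%:R.
  by rewrite -full (big_ltn N_gt0) [mode 0 i]/mode wave0 [1 + _]addrC addrK.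
have [-> | neq_ij] := eqVneq i j.
  by rewrite mulr1 (eq_bigr (fun=> 1)) ?sumr_const_nat ?subn0 // => k _; exact: mode_center.
have [d d_range mode_d] : exists2 d, (0 < d < N)%N & forall k, mode k i = wave N d k%:R.
  case: (ltngtP i j) => [ij | ji | /val_inj eq_ij]; last by rewrite eq_ij eqxx in neq_ij.
  - exists (j - i)%N => [|k]; first by rewrite subn_gt0 ij (leq_ltn_trans (leq_subr _ _)).
    by rewrite /mode -waveC -opprB -natrB ?waveN // ltnW.
  - exists (i - j)%N => [|k]; first by rewrite subn_gt0 ji (leq_ltn_trans (leq_subr _ _)).
    by rewrite /mode -waveC -natrB // ltnW.
rewrite mulr0 big_mkord (eq_bigr (fun k : 'I_N => wave N d (k%:R + 0))) ?sum_wave_eq0 // => k _.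
by rewrite addr0 mode_d.
Qed.

Lemma lap_green i : lap green i = (i == j)%:R - N%:R^-1.
Proof.
have N_neq0 : N%:R != 0 :> R by rewrite pnatr_eq0 -lt0n.
rewrite /lap /green !mulr_sumr -!sumrB.
rewrite (eq_big_nat _ _ (F2 := fun k => N%:R^-1 * mode k i)) => [|k k_range]; last first.
  transitivity (N%:R^-1 * ((lap_eig R N k)^-1 * lap (mode k) i)); first by rewrite /lap; ring.
  by rewrite lap_mode mulKf // lt0r_neq0 // lap_eig_gt0.
by rewrite -mulr_sumr sum_modes mulrBr mulr1 mulKf.
Qed.

Lemma dotp_lap_green (y : 'I_N -> R) : dotp y (lap green) = y j - mean y.
Proof.
rewrite /dotp /mean (eq_bigr (fun i => y i * (i == j)%:R - N%:R^-1 * y i)) => [|i _].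
  rewrite sumrB -mulr_sumr (bigD1 j) //= eqxx mulr1 big1 ?addr0 // => i /negbTE ->.
  exact: mulr0.
by rewrite lap_green; ring.
Qed.

Lemma sum_green : \sum_i green i = 0.
Proof.
rewrite /green -mulr_sumr exchange_big big_nat_cond big1 ?mulr0 // => k /andP[k_range _].
by rewrite -mulr_sumr sum_mode ?mulr0.
Qed.

Lemma dotp_green_lap_green :
  dotp green (lap green) = N%:R^-1 * \sum_(1 <= k < N) (lap_eig R N k)^-1.
Proof.
rewrite dotp_lap_green /mean sum_green mulr0 subr0 /green.
by congr (_ * _); apply: eq_bigr => k _; rewrite mode_center mulr1.
Qed.

End Green.

Lemma sqr_dev_le_dotp_lap (R : realType) (N : nat) (x : 'I_N -> R) (j : 'I_N) :
  (x j - mean x) ^+ 2 <= N%:R^-1 * (\sum_(1 <= k < N) (lap_eig R N k)^-1) * dotp x (lap x).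
Proof.
rewrite -(dotp_lap_green j) -(dotp_green_lap_green R j) mulrC.
exact: dotp_lap_sqr_le.
Qed.

Lemma dotp_KN_ge0 (R : realType) (mu : R) (N : nat) (x : 'I_N -> R) :
  0 <= mu -> 0 <= dotp x (KN mu x).
Proof.
by move=> mu_ge0; rewrite dotp_KN mulr_ge0 ?dotp_lap_ge0 // divr_ge0 // mulr_ge0 ?sqr_ge0.
Qed.

Lemma sum_inv_lap_eig (R : realType) (mu : R) (N : nat) : 0 < mu ->
  \sum_(1 <= k < N) (lap_eig R N k)^-1 =
  mu / (4 * sin (pi / N%:R) ^+ 2) * \sum_(1 <= k < N) (nu mu k N)^-1.
Proof.
move=> mu_gt0; rewrite mulr_sumr; apply: eq_big_nat => k k_range.
have sin1_gt0 : 0 < sin (pi / N%:R) :> R.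
  have := @sin_kpiN_gt0 R N 1; rewrite mul1r; apply.
  by case/andP: k_range => k_ge1 kN; rewrite /= (leq_ltn_trans k_ge1 kN).
have c_neq0 : mu / (4 * sin (pi / N%:R) ^+ 2) != 0.
  by rewrite mulf_neq0 ?invr_eq0 ?mulf_neq0 ?sqrf_eq0 ?lt0r_neq0.
have -> : nu mu k N = mu / (4 * sin (pi / N%:R) ^+ 2) * lap_eig R N k.
  by rewrite /nu /lap_eig; field; rewrite lt0r_neq0.
by rewrite [(_ * lap_eig R N k)^-1]invfM mulVKf.
Qed.

Lemma sqr_dev_le_dotp_KN (R : realType) (mu gamma : R) (N : nat) (x : 'I_N -> R) (j : 'I_N) :
  0 < mu -> 0 < gamma -> \sum_(1 <= k < N) (nu mu k N)^-1 <= gamma ->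
  gamma^-1 * N%:R * (x j - mean x) ^+ 2 <= dotp x (KN mu x).
Proof.
move=> mu_gt0 gamma_gt0; set S := \sum_(1 <= k < N) _ => S_le.
have N_neq0 : N%:R != 0 :> R by rewrite pnatr_eq0 -lt0n (leq_ltn_trans (leq0n j)).
apply: le_trans (ler_wpM2l _ (sqr_dev_le_dotp_lap x j)) _.
  by rewrite mulr_ge0 ?ler0n // invr_ge0 ltW.
have -> : gamma^-1 * N%:R * (N%:R^-1 * (\sum_(1 <= k < N) (lap_eig R N k)^-1) * dotp x (lap x)) =
          dotp x (KN mu x) * (S / gamma).
  rewrite (sum_inv_lap_eig N mu_gt0) dotp_KN -/S; set c := mu / _.
  by field; rewrite N_neq0 lt0r_neq0.
by rewrite ler_piMr ?dotp_KN_ge0 ?(ltW mu_gt0) // ler_pdivrMr // mul1r.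
Qed.

Theorem lemma5p2 (R : realType) (mu gamma : R) (hmu : 1 < mu) (hgamma : 0 < gamma)
  (hsum : forall N : nat, \sum_(1 <= k < N) (nu mu k N)^-1 <= gamma) :
  forall (N : nat) (x : 'I_N -> R),
    gamma^-1 * N%:R * supdev x <= dotp x (KN mu x).
Proof.
move=> N x; have mu_gt0 : 0 < mu := lt_trans ltr01 hmu.
rewrite /supdev; apply: (big_ind (fun y => gamma^-1 * N%:R * y <= _)) => [|a b ha hb|j _].
- by rewrite mulr0 dotp_KN_ge0 ?ltW.
- by rewrite maxEle; case: ifP.
- by rewrite real_normK ?num_real // (sqr_dev_le_dotp_KN x j mu_gt0 hgamma (hsum N)).
Qed.
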